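(* Let $g\in C(\mathbb{R},\mathbb{R})$ and $\mathcal{G}=\{g\}$. Then $\mathcal{K}_\mathcal{G}=\{\mathrm{CL}(E):E\in\mathrm{CL}(\mathbb{R})\}$ and $\mathcal{L}_\mathcal{G}=\{[g\restriction E]:E\in\mathrm{CL}(\mathbb{R})\}$, where $[g\restriction E]=\{f\in C(\mathbb{R},\mathbb{R}):f\restriction E=g\restriction E\}$.
   Context: For a closed set $E\subseteq\mathbb{R}$, $\mathrm{CL}(E)$ denotes the family of all closed subsets of $E$; $C(\mathbb{R},\mathbb{R})$ is the set of continuous functions $\mathbb{R}\to\mathbb{R}$. For $\mathcal{G}\subseteq C(\mathbb{R},\mathbb{R})$ let $R_\mathcal{G}=\{(f,E)\in C(\mathbb{R},\mathbb{R})\times\mathrm{CL}(\mathbb{R}):(\exists g\in\mathcal{G})\, f\restriction E=g\restriction E\}$. For $\mathcal{F}\subseteq C(\mathbb{R},\mathbb{R})$ and $\mathcal{E}\subseteq\mathrm{CL}(\mathbb{R})$ put $E_\mathcal{G}(\mathcal{F})=\{E\in\mathrm{CL}(\mathbb{R}):(\forall f\in\mathcal{F})\,(f,E)\in R_\mathcal{G}\}$ and $F_\mathcal{G}(\mathcal{E})=\{f\in C(\mathbb{R},\mathbb{R}):(\forall E\in\mathcal{E})\,(f,E)\in R_\mathcal{G}\}$. Let $\mathcal{K}_\mathcal{G}=\{E_\mathcal{G}(\mathcal{F}):\mathcal{F}\subseteq C(\mathbb{R},\mathbb{R})\}$ and $\mathcal{L}_\mathcal{G}=\{F_\mathcal{G}(\mathcal{E}):\mathcal{E}\subseteq\mathrm{CL}(\mathbb{R})\}$.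 *)

From mathcomp Require Import all_boot all_order all_algebra.
From mathcomp Require Import all_classical all_reals topology normedtype.
Set Implicit Arguments. Unset Strict Implicit. Unset Printing Implicit Defensive.
Import Order.TTheory GRing.Theory Num.Theory.
Local Open Scope classical_set_scope.
Local Open Scope ring_scope.

Section Defs.
Variable R : realType.

Definition Cfun : set (R -> R) := [set f : R -> R | continuous (f : R^o -> R^o)].

Definition CL (E : set R) : set (set R) := [set A : set R | closed (A : set R^o) /\ A `<=` E].

Definition RG (G : set (R -> R)) : set ((R -> R) * set R) :=
  [set p | Cfun p.1 /\ CL setT p.2 /\
           exists2 g, G g & forall x, p.2 x -> p.1 x = g x].

Definition EG (G : set (R -> R)) (F : set (R -> R)) : set (set R) :=
  [set E | CL setT E /\ forall f, F f -> RG G (f, E)].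

Definition FG (G : set (R -> R)) (Es : set (set R)) : set (R -> R) :=
  [set f | Cfun f /\ forall E, Es E -> RG G (f, E)].

Definition KG (G : set (R -> R)) : set (set (set R)) :=
  [set X | exists2 F, F `<=` Cfun & X = EG G F].
Definition LG (G : set (R -> R)) : set (set (R -> R)) :=
  [set X | exists2 Es, Es `<=` CL setT & X = FG G Es].

Definition restr_class (g : R -> R) (E : set R) : set (R -> R) :=
  [set f | Cfun f /\ forall x, E x -> f x = g x].

End Defs.

From mathcomp Require Import all_boot all_order all_algebra.
From mathcomp Require Import all_classical all_reals topology normedtype.
Import Order.TTheory GRing.Theory Num.Theory.
Local Open Scope classical_set_scope.
Local Open Scope ring_scope.

(* For G = {g}, a closed set lies in E_G(F) iff it is contained in the closed
   set where every f in F agrees with g, and a continuous f lies in F_G(Es) iff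
   it agrees with g on the closure of the union of Es.  So every E_G(F) is some
   CL(E) and every F_G(Es) is some [g|E].  Conversely CL(E) = E_G([g|E]),
   because E is exactly the agreement set of [g|E]: off E, adding to g a
   continuous function vanishing on E but not at the given point yields a
   member of [g|E] that disagrees with g there. *)

Lemma closed_eqfun {R : realType} {T : topologicalType} {f g : T -> R^o} :
  continuous f -> continuous g -> closed [set x | f x = g x].
Proof.
move=> cf cg.
have -> : [set x | f x = g x] = (fun x => f x - g x) @^-1` [set 0 : R^o].
  by apply/seteqP; split=> x /=; [move->; rewrite subrr | move/subr0_eq].
have /continuous_closedP : continuous (fun x => f x - g x : R^o).
  by move=> x; exact: continuousB (cf x) (cg x).
by apply; exact: closed_eq.
Qed.

Lemma separate_point_closed {R : realType} {T : uniformType} {E : set T} {x : T} :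
  closed E -> ~ E x ->
  exists2 h : T -> R^o, continuous h & (forall y, E y -> h y = 0) /\ h x = 1.
Proof.
move=> cE nEx; have sep := @point_uniform_separator R _ _ _ cE nEx.
exists (fun y => 1 - Urysohn [set x] E y).
  by move=> y; apply: continuousB; [exact: cst_continuous | exact: Urysohn_continuous].
split=> [y Ey|].
  by rewrite (Urysohn_sub1 sep (imageP _ Ey)) subrr.
by rewrite (Urysohn_sub0 sep (imageP _ (erefl x))) subr0.
Qed.

Section singleton_generator.
Variables (R : realType) (g : R -> R).

Lemma EG_set1 (F : set (R -> R)) : F `<=` Cfun (R:=R) ->
  EG [set g] F = CL (\bigcap_(f in F) [set x | f x = g x]).
Proof.
move=> FC; apply/seteqP; split=> E.
  move=> [[cE _] EF]; split=> // x Ex f Ff.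
  by have [_ [_ [_ -> fg]]] := EF f Ff; exact: fg.
move=> [cE Eagree]; split=> // f Ff; split; first exact: FC.
by split=> //; exists g => // x Ex; exact: Eagree.
Qed.

Hypothesis cg : Cfun g.

Lemma FG_set1 (Es : set (set R)) : Es `<=` CL setT ->
  FG [set g] Es = restr_class g (closure (\bigcup_(E in Es) E : set R^o)).
Proof.
move=> EsC; apply/seteqP; split=> f [cf fg]; split=> //.
  have agree : (\bigcup_(E in Es) E : set R^o) `<=` [set x | f x = g x].
    by move=> x [E EsE Ex]; have [_ [_ [_ -> fgE]]] := fg E EsE; exact: fgE.
  move=> x /(closureS agree).
  by rewrite -(closure_id _).1 //; exact: closed_eqfun.
move=> E EsE; split=> //; split; first exact: EsC.
by exists g => // x Ex; apply: fg; apply: subset_closure; exists E.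
Qed.

Lemma bigcap_restr_class (E : set R) : closed (E : set R^o) ->
  \bigcap_(f in restr_class g E) [set x | f x = g x] = E.
Proof.
move=> cE; apply/seteqP; split=> [x gEx|x Ex f [_ fg]]; last exact: fg.
apply: contrapT => nEx.
have [h ch [hE hx]] := separate_point_closed (R:=R) cE nEx.
have gh_restr : restr_class g E (fun y => g y + h y).
  split; first by move=> y; exact: continuousD (cg y) (ch y).
  by move=> y Ey; rewrite hE // addr0.
have := gEx _ gh_restr; rewrite /= -[RHS]addr0 => /addrI.
by rewrite hx => /eqP; rewrite oner_eq0.
Qed.

End singleton_generator.

Theorem theorem3p1 (R : realType) (g : R -> R) :
  Cfun g ->
  KG [set g] = [set CL E | E in CL (@setT R)] /\
  LG [set g] = [set restr_class g E | E in CL (@setT R)].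
Proof.
move=> cg; split; apply/seteqP; split=> X.
- move=> [F FC ->]; rewrite EG_set1 //.
  exists (\bigcap_(f in F) [set x | f x = g x]) => //; split=> //.
  by apply: closed_bigI => f Ff; exact: closed_eqfun (FC f Ff) cg.
- move=> [E [cE _] <-]; exists (restr_class g E); first by move=> f [].
  by rewrite EG_set1 ?bigcap_restr_class // => f [].
- move=> [Es EsC ->]; rewrite FG_set1 //.
  by exists (closure (\bigcup_(E in Es) E : set R^o)); split=> //; exact: closed_closure.
- move=> [E [cE _] <-]; have E_CL : [set E] `<=` CL setT by move=> _ ->.
  by exists [set E] => //; rewrite FG_set1 // bigcup_set1 -(closure_id _).1.
Qed.
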